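(* Let $H$ be a real or complex Hilbert space of dimension $n$, let $N\ge n$, let $F=\{f_i\}_{i=1}^N$ be a frame for $H$ with frame operator $S_F$, and let $\{q_i\}_{i=1}^N$ be a weight number sequence. Set $c=\max\{q_i\|f_i\|\,\|S_F^{-1}f_i\|:1\le i\le N\}$, $\varrho_1=\{i:q_i\|f_i\|\,\|S_F^{-1}f_i\|=c\}$, $\varrho_2=\{1,\dots,N\}\setminus\varrho_1$, and $H_j=\operatorname{span}\{f_i:i\in\varrho_j\}$ for $j=1,2$. If $H_1\cap H_2=\{0\}$, then the canonical dual $\{S_F^{-1}f_i\}_{i=1}^N$ is a 1-erasure probabilistic optimal dual of $F$.
   Context: Inner products are linear in the first argument. A frame for $H$ is a finite sequence spanning $H$. Analysis operator: $\Theta_F f=(\langle f,f_i\rangle)_i$. Synthesis operator: $\Theta_G^*(c)=\sum_ic_ig_i$. Frame operator: $S_F=\Theta_F^*\Theta_F$. A dual of $F$ is a frame $G=\{g_i\}_{i=1}^N$ with $f=\sum_i\langle f,f_i\rangle g_i=\sum_i\langle f,g_i\rangle f_i$ for all $f$. A probability sequence satisfies $0\le p_i\le1$ and $\sum p_i=1$. Weight numbers: $q_i=\frac{\sum_jp_j}{\sum_jp_j-p_i}\cdot\frac{N-1}{n}$ (assumed well defined). $\mathcal{D}_1^p$ is the set of $N\times N$ diagonal matrices with exactly one nonzero diagonal entry, equal to $q_i$ in position $(i,i)$. $d_1^p(F,G)=\max\{\|\Theta_G^*D\Theta_F\|:D\in\mathcal{D}_1^p\}$ (operator norm); this equals $\max_i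 q_i\|f_i\|\,\|g_i\|$. A dual $G$ of $F$ is a 1-erasure probabilistic optimal dual of $F$ if $d_1^p(F,G)=\inf\{d_1^p(F,G'):G'\text{ a dual of }F\}$. *)

(* A Hilbert space of dimension n over K is modelled by the
   coordinate space 'rV[K]_n with the standard inner product
   <x, y> = \sum_k x_k * cj (y_k)  (linear in the first argument).
   Real case: K : rcfType, cj = id, sq = Num.sqrt.
   Complex case: K : numClosedFieldType, cj = Num.conj, sq = sqrtC. *)
From mathcomp Require Import all_boot all_order all_algebra.
Set Implicit Arguments.
Unset Strict Implicit.
Unset Printing Implicit Defensive.
Import Order.TTheory GRing.Theory Num.Theory.
Local Open Scope ring_scope.

Section FrameDefs.
Variables (K : numFieldType) (cj : K -> K) (sq : K -> K).
Variables (n N : nat).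

Definition inner (x y : 'rV[K]_n) : K := \sum_(k < n) x 0 k * cj (y 0 k).

Definition vnorm (x : 'rV[K]_n) : K := sq (inner x x).

Definition is_frame (F : 'I_N -> 'rV[K]_n) : Prop :=
  (\sum_(i < N) <<F i>> == 1%:M)%MS.

Definition analysis (F : 'I_N -> 'rV[K]_n) (x : 'rV[K]_n) : 'I_N -> K :=
  fun i => inner x (F i).

Definition synthesis (G : 'I_N -> 'rV[K]_n) (c : 'I_N -> K) : 'rV[K]_n :=
  \sum_(i < N) c i *: G i.

(* frame operator S_F = Theta_F^* Theta_F, as a matrix acting on the right:
   x *m frame_mx F = \sum_i <x, f_i> f_i *)
Definition frame_mx (F : 'I_N -> 'rV[K]_n) : 'M[K]_n :=
  \sum_(i < N) (map_mx cj (F i))^T *m F i.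

Definition canonical_dual (F : 'I_N -> 'rV[K]_n) : 'I_N -> 'rV[K]_n :=
  fun i => F i *m invmx (frame_mx F).

Definition is_dual (F G : 'I_N -> 'rV[K]_n) : Prop :=
  is_frame G /\
  forall f : 'rV[K]_n,
    f = synthesis G (analysis F f) /\ f = synthesis F (analysis G f).

Definition prob_seq (p : 'I_N -> K) : Prop :=
  (forall i, 0 <= p i <= 1) /\ \sum_(i < N) p i = 1.

(* q is the weight number sequence of some probability sequence p
   (assumed well defined: n <> 0 and \sum_j p_j - p_i <> 0) *)
Definition weight_numbers (q : 'I_N -> K) : Prop :=
  exists p : 'I_N -> K, prob_seq p /\ (0 < n)%N /\
    forall i, (\sum_(j < N) p j) - p i != 0 /\
      q i = (\sum_(j < N) p j) / ((\sum_(j < N) p j) - p i)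
            * ((N - 1)%:R / n%:R).

(* d_1^p(F,G) = max_i q_i ||f_i|| ||g_i||  (the operator-norm maximum over
   D_1^p, in the closed form given in the paper) *)
Definition d1 (q : 'I_N -> K) (F G : 'I_N -> 'rV[K]_n) : K :=
  \big[Num.max/0]_(i < N) (q i * vnorm (F i) * vnorm (G i)).

Definition prob_optimal_dual (q : 'I_N -> K) (F G : 'I_N -> 'rV[K]_n) : Prop :=
  is_dual F G /\
  forall G' : 'I_N -> 'rV[K]_n, is_dual F G' -> d1 q F G <= d1 q F G'.

Definition span_of (F : 'I_N -> 'rV[K]_n) (A : {set 'I_N}) : 'M[K]_n :=
  (\sum_(i in A) <<F i>>)%MS.

Definition prop4p1_claim (q : 'I_N -> K) (F : 'I_N -> 'rV[K]_n) : Prop :=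
  let g := canonical_dual F in
  let c := \big[Num.max/0]_(i < N) (q i * vnorm (F i) * vnorm (g i)) in
  let rho1 := [set i : 'I_N | q i * vnorm (F i) * vnorm (g i) == c] in
  let rho2 := ~: rho1 in
  (span_of F rho1 :&: span_of F rho2 == (0 : 'M[K]_n))%MS ->
  prob_optimal_dual q F g.

End FrameDefs.

From mathcomp Require Import all_boot all_order all_algebra.
Set Implicit Arguments. Unset Strict Implicit. Unset Printing Implicit Defensive.
Import Order.TTheory GRing.Theory Num.Theory.
Local Open Scope ring_scope.

(* Suppose a dual G had d1(F, G) < c.  Since c > 0, rho1 is nonempty, and every
   i in rho1 has ||G_i|| < ||S^-1 f_i||.  The differences u_i = G_i - S^-1 f_i
   satisfy \sum_i <x, f_i> u_i = 0 for all x; testing this against the projection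
   of H onto H_1 along H_2 (which exists because H_1 and H_2 are independent) gives
   \sum_(i in rho1) <u_i, S^-1 f_i> = 0, hence
   \sum_(i in rho1) ||G_i||^2 = \sum_(i in rho1) (||S^-1 f_i||^2 + ||u_i||^2),
   a contradiction. *)

Section RealBigmax.
Variables (R : numDomainType) (I : eqType) (x0 : R) (f : I -> R).
Hypotheses (x0_real : x0 \is Num.real) (f_real : forall i, f i \is Num.real).

Let bigmax_is_real r : \big[Num.max/x0]_(i <- r) f i \is Num.real.
Proof. exact: bigmax_real. Qed.

Lemma real_bigmax_ge_id r : x0 <= \big[Num.max/x0]_(i <- r) f i.
Proof.
elim: r => [|a r IH]; rewrite ?big_nil // big_cons.
by rewrite comparable_le_max ?real_comparable ?bigmax_is_real // IH orbT.
Qed.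

Lemma real_le_bigmax r i : i \in r -> f i <= \big[Num.max/x0]_(j <- r) f j.
Proof.
elim: r => [|a r IH] //.
rewrite in_cons big_cons comparable_le_max ?real_comparable ?bigmax_is_real //.
by case/orP=> [/eqP-> | /IH->]; rewrite ?lexx ?orbT.
Qed.

Lemma real_bigmax_eq_arg r :
  \big[Num.max/x0]_(i <- r) f i = x0 \/
  exists2 i, i \in r & \big[Num.max/x0]_(j <- r) f j = f i.
Proof.
elim: r => [|a r IH]; first by left; rewrite big_nil.
rewrite big_cons comparable_maxEge ?real_comparable ?bigmax_is_real //; case: ifP => _.
  by right; exists a; rewrite ?mem_head.
case: IH => [->|[i ir ->]]; [left | right; exists i] => //.
by rewrite in_cons ir orbT.
Qed.
End RealBigmax.

Lemma weight_numbers_ge0 (K : numFieldType) (n N : nat) (q : 'I_N -> K) :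
  weight_numbers n q -> forall i, 0 <= q i.
Proof.
case=> p [[p01 ->] [_ qE]] i; have [_ ->] := qE i.
have /andP[_ p_le1] := p01 i.
by rewrite !mulr_ge0 ?invr_ge0 ?subr_ge0 ?ler0n.
Qed.

Section InnerProductSpace.
Variables (K : numFieldType) (cj : {rmorphism K -> K}).
Hypothesis cjK : involutive cj.
Hypothesis mul_cj : forall a, a * cj a = `|a| ^+ 2.
Variable n : nat.
Implicit Types x y z : 'rV[K]_n.

Local Notation inner := (inner cj).
Local Notation adj A := (map_mx cj A)^T.

Lemma innerE x y : inner x y = (x *m adj y) 0 0.
Proof. by rewrite !mxE; apply: eq_bigr => k _; rewrite !mxE. Qed.

Lemma mulmx_adj_row m x y (Z : 'M_(1, m)) : x *m (adj y *m Z) = inner x y *: Z.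
Proof. by rewrite mulmxA [x *m _]mx11_scalar -innerE mul_scalar_mx. Qed.

Lemma inner_trace x y : inner x y = \tr (adj y *m x).
Proof. by rewrite innerE -trace_mx11 mxtrace_mulC. Qed.

Lemma conj_inner x y : cj (inner x y) = inner y x.
Proof.
by rewrite /inner rmorph_sum; apply: eq_bigr => k _; rewrite rmorphM cjK mulrC.
Qed.

Lemma psum_mul_cj_eq0 (I : finType) (a : I -> K) :
  \sum_i a i * cj (a i) = 0 -> forall i, a i = 0.
Proof.
move=> sum0 i; have a_ge0 j : true -> 0 <= a j * cj (a j).
  by rewrite mul_cj exprn_ge0.
have /eqP := psumr_eq0P a_ge0 sum0 (i := i) isT.
by rewrite mul_cj sqrf_eq0 normr_eq0 => /eqP.
Qed.

Lemma inner_ge0 x : 0 <= inner x x.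
Proof. by apply: sumr_ge0 => k _; rewrite mul_cj exprn_ge0. Qed.

Lemma inner_eq0 x : inner x x = 0 -> x = 0.
Proof. by move/psum_mul_cj_eq0=> x0; apply/rowP => k; rewrite x0 mxE. Qed.

Lemma innerDl x y z : inner (x + y) z = inner x z + inner y z.
Proof. by rewrite /inner -big_split; apply: eq_bigr => k _; rewrite mxE mulrDl. Qed.

Lemma innerDr x y z : inner x (y + z) = inner x y + inner x z.
Proof.
by rewrite /inner -big_split; apply: eq_bigr => k _; rewrite mxE rmorphD mulrDr.
Qed.

Lemma inner0r x : inner x 0 = 0.
Proof. by rewrite /inner big1 // => k _; rewrite mxE rmorph0 mulr0. Qed.

Lemma inner_mulmxr x y (A : 'M_n) : inner x (y *m A) = inner (x *m adj A) y.
Proof. by rewrite !innerE map_mxM trmx_mul mulmxA. Qed.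

Lemma inner_sqr_add x y :
  inner (x + y) (x + y) = inner x x + (inner x y + inner y x) + inner y y.
Proof. by rewrite innerDl !innerDr !addrA. Qed.

Lemma innerZl a x y : inner (a *: x) y = a * inner x y.
Proof. by rewrite !innerE -scalemxAl mxE. Qed.

Lemma inner_suml (I : finType) (v : I -> 'rV_n) y :
  inner (\sum_i v i) y = \sum_i inner (v i) y.
Proof.
by rewrite innerE mulmx_suml summxE; apply: eq_bigr => i _; rewrite innerE.
Qed.

Section Frame.
Variables (N : nat) (F : 'I_N -> 'rV[K]_n).
Local Notation S := (frame_mx cj F).
Local Notation g := (canonical_dual cj F).

Lemma frame_mxE x : x *m S = \sum_i inner x (F i) *: F i.
Proof. by rewrite mulmx_sumr; apply: eq_bigr => i _; apply: mulmx_adj_row. Qed.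

Lemma adj_frame_mx : adj S = S.
Proof.
apply/matrixP => a b; rewrite !mxE !summxE rmorph_sum; apply: eq_bigr => i _.
by rewrite !mxE !big_ord1 !mxE rmorphM cjK mulrC.
Qed.

Lemma sum_inner_adj_eq0 (u : 'I_N -> 'rV_n) (B : 'M_n) :
  \sum_i adj (F i) *m u i = 0 -> \sum_i inner (u i) (F i *m B) = 0.
Proof.
move=> sum0; under eq_bigr do rewrite inner_trace map_mxM trmx_mul -mulmxA.
by rewrite -linear_sum -mulmx_sumr sum0 mulmx0 linear0.
Qed.

Hypothesis frameF : is_frame F.

Lemma frame_orthogonal_eq0 x : (forall i, inner x (F i) = 0) -> x = 0.
Proof.
move=> xF0; apply: inner_eq0; rewrite innerE.
have /andP[_ span1] := frameF.
suff /sub_kermxP-> : (x <= kermx (adj x))%MS by rewrite mxE.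
apply: submx_trans (submx1 x) (submx_trans span1 _).
apply/sumsmx_subP => i _; rewrite genmxE; apply/sub_kermxP/rowP => j.
by rewrite ord1 -innerE -conj_inner xF0 rmorph0 mxE.
Qed.

Lemma frame_mx_unit : S \in unitmx.
Proof.
rewrite -row_free_unit -kermx_eq0; apply/eqP/row_matrixP => k; rewrite row0.
set x := row k _; have /sub_kermxP xS0 : (x <= kermx S)%MS by apply: row_sub.
apply: frame_orthogonal_eq0; apply: psum_mul_cj_eq0.
under eq_bigr do rewrite conj_inner -innerZl.
by rewrite -inner_suml -frame_mxE xS0 /inner big1 // => j _; rewrite mxE mul0r.
Qed.

Lemma adj_invmx_frame : adj (invmx S) = invmx S.
Proof. by rewrite map_invmx trmx_inv adj_frame_mx. Qed.

Lemma canonical_dual_synthesis x : synthesis g (analysis cj F x) = x.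
Proof.
rewrite /synthesis /analysis; under eq_bigr do rewrite scalemxAl.
by rewrite -mulmx_suml -frame_mxE mulmxK // frame_mx_unit.
Qed.

Lemma canonical_dual_analysis x : synthesis F (analysis cj g x) = x.
Proof.
rewrite /synthesis /analysis; under eq_bigr do rewrite inner_mulmxr adj_invmx_frame.
by rewrite -frame_mxE mulmxKV // frame_mx_unit.
Qed.

Lemma canonical_dual_is_dual : is_dual cj F g.
Proof.
split; last by move=> x; rewrite canonical_dual_synthesis canonical_dual_analysis.
apply/andP; split; first exact: submx1.
apply/row_subP => k; rewrite -(canonical_dual_synthesis (row k 1%:M)).
apply: summx_sub => i _; apply: scalemx_sub.
by apply: (sumsmx_sup i) => //; rewrite genmxE.
Qed.

Lemma dual_defect_adj G : is_dual cj F G -> \sum_i adj (F i) *m (G i - g i) = 0.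
Proof.
case=> _ dualG; apply/row_matrixP => k; rewrite row0 rowE mulmx_sumr.
set x := delta_mx 0 k; under eq_bigr do rewrite mulmx_adj_row scalerBr.
have := canonical_dual_synthesis x; have [xG _] := dualG x.
by rewrite sumrB; move: xG; rewrite /synthesis /analysis => <- ->; rewrite subrr.
Qed.

Section Block.
Variable A : {set 'I_N}.
Hypothesis indepA : (span_of F A :&: span_of F (~: A) == (0 : 'M_n))%MS.

Lemma dual_defect_orthogonal G :
  is_dual cj F G -> \sum_(i in A) inner (G i - g i) (g i) = 0.
Proof.
(* [F i *m P *m S^-1] is [g i] on [A] and [0] off [A]. *)
pose P := proj_mx (span_of F A) (span_of F (~: A)).
move/dual_defect_adj/(sum_inner_adj_eq0 (P *m invmx S)) => sum0; rewrite -[RHS]sum0.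
have capA0 : (span_of F A :&: span_of F (~: A))%MS = 0.
  by apply/eqP; rewrite -submx0; case/andP: indepA.
have span_sub i (B : {set 'I_N}) : i \in B -> (F i <= span_of F B)%MS.
  by move=> iB; rewrite (sumsmx_sup i) ?genmxE.
rewrite [RHS](bigID (mem A)) /= [X in _ + X]big1 ?addr0 => [|i iNA].
  by apply: eq_bigr => i iA; rewrite mulmxA proj_mx_id ?span_sub.
by rewrite mulmxA proj_mx_0 ?span_sub ?inE // mul0mx inner0r.
Qed.

Lemma canonical_dual_sum_min G : is_dual cj F G ->
  \sum_(i in A) inner (g i) (g i) <= \sum_(i in A) inner (G i) (G i).
Proof.
move=> /dual_defect_orthogonal defect0.
have defect0' : \sum_(i in A) inner (g i) (G i - g i) = 0.
  rewrite -[RHS](rmorph0 cj) -[in RHS]defect0 rmorph_sum.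
  by apply: eq_bigr => i _; rewrite conj_inner.
rewrite [X in _ <= X](eq_bigr (fun i => inner (g i + (G i - g i)) (g i + (G i - g i))));
  last by move=> i _; rewrite addrC subrK.
rewrite (eq_bigr _ (fun i _ => inner_sqr_add _ _)) !big_split /= defect0 defect0'.
by rewrite !addr0 lerDl sumr_ge0 // => i _; apply: inner_ge0.
Qed.
End Block.

Section Optimality.
Variable sq : K -> K.
Hypothesis sq_ge0 : forall a, 0 <= a -> 0 <= sq a.
Hypothesis sq_lt : forall a b, 0 <= a -> 0 <= b -> sq a < sq b -> a < b.

Lemma canonical_dual_prob_optimal q : weight_numbers n q -> prop4p1_claim cj sq q F.
Proof.
move=> /weight_numbers_ge0 q_ge0; rewrite /prop4p1_claim /=.
set c := \big[Num.max/0]_(i < N) _; set rho1 := [set i | _].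
move=> indep; split; first exact: canonical_dual_is_dual.
move=> G dualG; rewrite /d1 -/c.
pose w (G' : 'I_N -> 'rV_n) i := q i * vnorm cj sq (F i) * vnorm cj sq (G' i).
have w_real G' i : w G' i \is Num.real.
  by rewrite ger0_real // !mulr_ge0 ?q_ge0 ?sq_ge0 ?inner_ge0.
have bigmax_w_real G' : \big[Num.max/0]_i w G' i \is Num.real.
  by apply: bigmax_real => // i _; apply: w_real.
rewrite real_leNgt ?bigmax_w_real //; apply/negP => lt_c.
have c_gt0 : 0 < c.
  by apply: le_lt_trans lt_c; apply: (real_bigmax_ge_id (real0 _) (w_real G)).
have [c0 | [i0 _ c_i0]] : c = 0 \/ exists2 i, i \in index_enum 'I_N & c = w g i
  := real_bigmax_eq_arg (real0 _) (w_real g) _.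
  by rewrite c0 ltxx in c_gt0.
have shorter i : i \in rho1 -> inner (G i) (G i) < inner (g i) (g i).
  rewrite inE => /eqP w_c.
  have : w G i < w g i.
    rewrite /w w_c; apply: le_lt_trans lt_c.
    exact: (real_le_bigmax (real0 _) (w_real G) (mem_index_enum i)).
  have qF_gt0 : 0 < q i * vnorm cj sq (F i).
    rewrite lt_def mulr_ge0 ?q_ge0 ?sq_ge0 ?inner_ge0 // andbT.
    by apply: contraTneq c_gt0 => qF0; rewrite -w_c qF0 mul0r ltxx.
  by rewrite /w ltr_pM2l // => /sq_lt; apply; apply: inner_ge0.
have := canonical_dual_sum_min indep dualG.
rewrite lt_geF //; apply: ltr_sum shorter.
by apply/hasP; exists i0; rewrite ?mem_index_enum // inE c_i0.
Qed.

End Optimality.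
End Frame.
End InnerProductSpace.

Theorem proposition4p1 :
  (* real Hilbert space of dimension n *)
  (forall (R : rcfType) (n N : nat) (F : 'I_N -> 'rV[R]_n) (q : 'I_N -> R),
      (n <= N)%N ->
      is_frame F ->
      weight_numbers n q ->
      prop4p1_claim id Num.sqrt q F) /\
  (* complex Hilbert space of dimension n *)
  (forall (C : numClosedFieldType) (n N : nat) (F : 'I_N -> 'rV[C]_n)
          (q : 'I_N -> C),
      (n <= N)%N ->
      is_frame F ->
      weight_numbers n q ->
      prop4p1_claim Num.conj sqrtC q F).
Proof.
split.
- move=> R n N F q _ frameF qW.
  have mul_id (a : R) : a * idfun a = `|a| ^+ 2.
    by rewrite real_normK ?num_real // expr2.
  have sqrt_lt (a b : R) : 0 <= a -> 0 <= b -> Num.sqrt a < Num.sqrt b -> a < b.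
    move=> _ _ lt_sqrt; have b_gt0 : 0 < b.
      by rewrite -sqrtr_gt0 (le_lt_trans (sqrtr_ge0 a)).
    by rewrite ltr_sqrt in lt_sqrt.
  by apply: (@canonical_dual_prob_optimal R idfun) qW => // a _; apply: sqrtr_ge0.
- move=> C n N F q _ frameF qW.
  have mul_conj (a : C) : a * a^* = `|a| ^+ 2 by rewrite normCK.
  have sqrtC_lt (a b : C) : 0 <= a -> 0 <= b -> sqrtC a < sqrtC b -> a < b.
    by move=> a_ge0 b_ge0; rewrite ltr_sqrtC ?nnegrE.
  apply: (@canonical_dual_prob_optimal C Num.conj) qW => //; first exact: conjCK.
  by move=> a; rewrite sqrtC_ge0.
Qed.
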